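(* Let $C$ be a $k$-context of the call-by-value $\lambda$-calculus and let $c_1,c_2\in\mathcal{T}(C)$ (so $c_1,c_2$ are resource $k$-contexts). Let $\tilde c_1$ be a rigid of $c_1$ and $\tilde c_2$ a rigid of $c_2$. For $i=1,\dots,k$ let $\vec v^{\,i}=\langle v^i_1,\dots,v^i_{\deg_{\Box_i}(c_1)}\rangle$ and $\vec u^{\,i}=\langle u^i_1,\dots,u^i_{\deg_{\Box_i}(c_2)}\rangle$ be lists of resource values. If $\tilde c_1[\vec v^{\,1},\dots,\vec v^{\,k}]=\tilde c_2[\vec u^{\,1},\dots,\vec u^{\,k}]$, then $c_1=c_2$ and $[\vec v^{\,i}]=[\vec u^{\,i}]$ for every $i=1,\dots,k$, where $[\vec w]$ denotes the finite multiset of the elements of the list $\vec w$.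
   Context: CbV $\lambda$-terms are ordinary $\lambda$-terms $M::=x\mid \lambda x.M\mid MM$; values are variables and abstractions. A $k$-context $C$ is a $\lambda$-term possibly containing holes $\Box_1,\dots,\Box_k$ (each any number of times); $C[M_1,\dots,M_k]$ denotes filling $\Box_i$ with $M_i$ (variable capture allowed). Resource CbV terms: resource values $v::=x\mid \lambda x.s$ and resource simple terms $s::= s_1s_2\mid [v_1,\dots,v_n]$ ($n\ge 0$, brackets denote finite multisets, ''bags''), taken up to $\alpha$-equivalence. Resource $k$-contexts are defined the same way but additionally allowing $\Box_1,\dots,\Box_k$ as value-contexts: $c^v::=\Box_1\mid\dots\mid\Box_k\mid x\mid \lambda x.c^s$, $c^s::=c^s_1c^s_2\mid[c^v_1,\dots,c^v_n]$. $\deg_{\Box_i}(c)$ is the number of occurrences of $\Box_i$ in $c$. Taylor expansion $\mathcal{T}$ (sets of resource simple terms/contexts): $\mathcal{T}(x)=\{[x,\dots,x]\ (n \text{ copies})\mid n\in\mathbb N\}$, $\mathcal{T}(\Box_i)=\{[\Box_i,\dots,\Box_i]\ (n\text{ copies})\mid n\in\mathbb N\}$, $\mathcal{T}(\lambda x.M)=\{[\lambda x.s_1,\dots,\lambda x.s_n]\mid n\in\mathbb N,\ s_j\in\mathcal{T}(M)\}$, $\mathcal{T}(M_1M_2)=\{s_1s_2\mid s_j\in\mathcal{T}(M_j)\}$. Rigid contexts are built like resource contexts but with ordered lists $\langle\cdot,\dots,\cdot\rangle$ in place of bags. The rigids of a resource context $c$: $\mathrm{Rigid}(\Box_i)=\{\Box_i\}$,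 $\mathrm{Rigid}(x)=\{x\}$, $\mathrm{Rigid}(\lambda x.c_0)=\{\lambda x.\tilde c_0\mid\tilde c_0\in\mathrm{Rigid}(c_0)\}$, $\mathrm{Rigid}(c_0c_1)=\{\tilde c_0\tilde c_1\mid \tilde c_j\in\mathrm{Rigid}(c_j)\}$, $\mathrm{Rigid}([c_1,\dots,c_n])=\{\langle\tilde c_{\sigma(1)},\dots,\tilde c_{\sigma(n)}\rangle\mid\sigma\text{ a permutation},\ \tilde c_j\in\mathrm{Rigid}(c_j)\}$. Filling a rigid $\tilde c$ of $c$ with lists $\vec v^{\,i}$ of resource values of length $\deg_{\Box_i}(c)$, producing a resource term $\tilde c[\vec v^{\,1},\dots,\vec v^{\,k}]$: for $\tilde c=\Box_i$, the result is the unique value in $\vec v^{\,i}$ (others lists empty); for $x$ it is $x$; $(\lambda x.\tilde c_0)[\vec v^{\,1},\dots,\vec v^{\,k}]=\lambda x.\tilde c_0[\vec v^{\,1},\dots,\vec v^{\,k}]$; for $\tilde c_1\tilde c_2$, split each $\vec v^{\,i}=\vec w^{\,i1}\vec w^{\,i2}$ (concatenation) with $\vec w^{\,ij}$ of length $\deg_{\Box_i}(c_j)$, and the result is $\tilde c_1[\vec w^{\,11},\dots,\vec w^{\,k1}]\,\tilde c_2[\vec w^{\,12},\dots,\vec w^{\,k2}]$; for $\langle\tilde c_{\sigma(1)},\dots,\tilde c_{\sigma(n)}\rangle$, split each $\vec v^{\,i}=\vec w^{\,i1}\cdots\vec w^{\,in}$ with $\vec w^{\,ij}$ of length $\deg_{\Box_i}(c_{\sigma(j)})$,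 and the result is the bag $[\tilde c_{\sigma(1)}[\vec w^{\,11},\dots,\vec w^{\,k1}],\dots,\tilde c_{\sigma(n)}[\vec w^{\,1n},\dots,\vec w^{\,kn}]]$. *)

From Stdlib Require Import List Arith Permutation.
Import ListNotations.

(* lambda k-contexts: de Bruijn variables, holes Box_i with index i : nat
   (the paper's Box_1..Box_k are our Box_0..Box_(k-1)). *)
Inductive lterm : Type :=
| LVar (x : nat)
| LHole (i : nat)
| LLam (M : lterm)
| LApp (M N : lterm).

Fixpoint holes_below (k : nat) (C : lterm) : Prop :=
  match C with
  | LVar _ => True
  | LHole i => i < k
  | LLam M => holes_below k M
  | LApp M N => holes_below k M /\ holes_below k N
  end.

(* resource syntax parameterised by a type A of hole labels:
   A = nat gives resource contexts (and rigid contexts, reading lists as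
   ordered), A = Empty_set gives resource terms (no holes). *)
Inductive rv (A : Type) : Type :=
| RVar (x : nat)
| RHole (a : A)
| RLam (s : rs A)
with rs (A : Type) : Type :=
| RApp (s1 s2 : rs A)
| RBag (l : list (rv A)).

Arguments RVar {A} x.
Arguments RHole {A} a.
Arguments RLam {A} s.
Arguments RApp {A} s1 s2.
Arguments RBag {A} l.

(* Equality of resource terms/contexts: bags are finite multisets
   (alpha-equivalence is syntactic identity in de Bruijn syntax). *)
Inductive req_v {A : Type} : rv A -> rv A -> Prop :=
| req_var x : req_v (RVar x) (RVar x)
| req_hole a : req_v (RHole a) (RHole a)
| req_lam s t : req_s s t -> req_v (RLam s) (RLam t)
with req_s {A : Type} : rs A -> rs A -> Prop :=
| req_app s1 s2 t1 t2 : req_s s1 t1 -> req_s s2 t2 -> req_s (RApp s1 s2) (RApp t1 t2)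
| req_bag l1 l2 l2' : Permutation l2 l2' -> Forall2 req_v l1 l2' ->
    req_s (RBag l1) (RBag l2).

(* Rigid(c): rigid contexts are the same syntax with lists read as ordered;
   rc is a rigid of c iff rc is obtained from c by choosing an ordering of
   each bag, recursively, i.e. exactly the clauses of req_s. *)
Definition rigid_of (rc c : rs nat) : Prop := req_s rc c.

Fixpoint inT (M : lterm) (c : rs nat) : Prop :=
  match M with
  | LVar x => exists n, c = RBag (repeat (RVar x) n)
  | LHole i => exists n, c = RBag (repeat (RHole i) n)
  | LLam M0 => exists l : list (rs nat),
      c = RBag (map RLam l) /\ (forall s, In s l -> inT M0 s)
  | LApp M1 M2 => exists s1 s2, c = RApp s1 s2 /\ inT M1 s1 /\ inT M2 s2
  end.

Fixpoint deg_v (v : rv nat) (i : nat) : nat :=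
  match v with
  | RVar _ => 0
  | RHole j => if Nat.eqb i j then 1 else 0
  | RLam s => deg_s s i
  end
with deg_s (s : rs nat) (i : nat) : nat :=
  match s with
  | RApp s1 s2 => deg_s s1 i + deg_s s2 i
  | RBag l => (fix go (l : list (rv nat)) : nat :=
                 match l with
                 | [] => 0
                 | v :: l' => deg_v v i + go l'
                 end) l
  end.

Definition rterm_v := rv Empty_set.
Definition rterm_s := rs Empty_set.

(* Filling a rigid with lists f i of resource values (f i for Box_i);
   lists are consumed left to right, split according to the degrees of
   the sub-rigids.  For a hole the (unique, when lengths match) head of the
   list is used; the default RVar 0 is never reached when
   length (f i) = deg_{Box_i}. *)
Fixpoint fill_v (v : rv nat) (f : nat -> list rterm_v) : rterm_v :=
  match v with
  | RVar x => RVar x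
  | RHole j => hd (RVar 0) (f j)
  | RLam s => RLam (fill_s s f)
  end
with fill_s (s : rs nat) (f : nat -> list rterm_v) : rterm_s :=
  match s with
  | RApp s1 s2 =>
      RApp (fill_s s1 (fun i => firstn (deg_s s1 i) (f i)))
           (fill_s s2 (fun i => skipn (deg_s s1 i) (f i)))
  | RBag l => RBag ((fix go (l : list (rv nat)) (f : nat -> list rterm_v)
                        : list rterm_v :=
                       match l with
                       | [] => []
                       | v :: l' =>
                           fill_v v (fun i => firstn (deg_v v i) (f i))
                             :: go l' (fun i => skipn (deg_v v i) (f i))
                       end) l f)
  end.

From Stdlib Require Import List Arith Permutation Lia FunctionalExtensionality.
Import ListNotations.

(* Since Taylor expansion and filling are compatible with the
   multiset equality of bags, we may replace c1, c2 by their rigids, which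
   are again in T(C); then we prove, by induction on C, that filling two
   elements of T(C) is injective up to multiset equality.  Applications are
   split componentwise.  For an abstraction C = \x.M the filled terms are
   bags of filled abstractions: the head of the first bag is matched with
   some element of the second, the induction hypothesis for M identifies
   the two abstractions together with the values put into them, and we
   conclude by induction on the length of the bag, removing the matched
   element and its values from the second filling. *)

(* The local fixpoints of [deg_s] and [fill_s] on bags, as named functions. *)
Fixpoint deg_list (l : list (rv nat)) (i : nat) : nat :=
  match l with [] => 0 | v :: l' => deg_v v i + deg_list l' i end.

Fixpoint fill_list (l : list (rv nat)) (f : nat -> list rterm_v) : list rterm_v :=
  match l with
  | [] => []
  | v :: l' => fill_v v (fun i => firstn (deg_v v i) (f i))
               :: fill_list l' (fun i => skipn (deg_v v i) (f i))
  end.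

Lemma deg_s_bag l i : deg_s (RBag l) i = deg_list l i.
Proof. induction l; simpl; auto. Qed.

Lemma fill_s_bag l f : fill_s (RBag l) f = RBag (fill_list l f).
Proof. revert f; induction l; simpl; auto. Qed.

(** * Multiset equality of resource terms *)

Fixpoint req_v_refl {A} (v : rv A) : req_v v v
with req_s_refl {A} (s : rs A) : req_s s s.
Proof.
- destruct v; constructor. apply req_s_refl.
- destruct s as [s1 s2 | l]; [constructor; apply req_s_refl |].
  apply req_bag with l; [reflexivity |].
  induction l; constructor; auto.
Qed.

Fixpoint req_v_sym {A} (v w : rv A) (H : req_v v w) {struct H} : req_v w v
with req_s_sym {A} (s t : rs A) (H : req_s s t) {struct H} : req_s t s.
Proof.
- destruct H; constructor. apply req_s_sym; assumption.
- destruct H as [s1 s2 t1 t2 H1 H2 | l1 l2 l2' P F].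
  + constructor; apply req_s_sym; assumption.
  + assert (F' : Forall2 req_v l2' l1).
    { clear - F req_v_sym. induction F; constructor; auto. }
    destruct (Permutation_Forall2 (Permutation_sym P) F') as [l1' [P1 F1]].
    apply req_bag with l1'; assumption.
Qed.

Fixpoint req_v_trans {A} (u v w : rv A) (H : req_v u v) {struct H} :
  req_v v w -> req_v u w
with req_s_trans {A} (s t r : rs A) (H : req_s s t) {struct H} :
  req_s t r -> req_s s r.
Proof.
- destruct H; intros H2; inversion H2; subst; constructor.
  eapply req_s_trans; eassumption.
- destruct H as [s1 s2 t1 t2 H1 H2 | l1 l2 l2' P F]; intros Htr.
  + inversion Htr; subst. constructor; eapply req_s_trans; eassumption.
  + inversion Htr as [| ? ? l3' P2 F2]; subst.
    destruct (Permutation_Forall2 P F2) as [l3'' [P3 F3]].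
    apply req_bag with l3''; [eapply perm_trans; eassumption |].
    clear - F F3 req_v_trans. revert l3'' F3.
    induction F; intros l3'' F3; inversion F3; subst; constructor; eauto.
Qed.

Lemma deg_list_perm l m i : Permutation l m -> deg_list l i = deg_list m i.
Proof. induction 1; simpl; lia. Qed.

Fixpoint req_v_deg (v w : rv nat) (H : req_v v w) {struct H} :
  forall i, deg_v v i = deg_v w i
with req_s_deg (s t : rs nat) (H : req_s s t) {struct H} :
  forall i, deg_s s i = deg_s t i.
Proof.
- destruct H; intros i; simpl; auto.
- destruct H as [s1 s2 t1 t2 H1 H2 | l1 l2 l2' P F]; intros i.
  + simpl. rewrite (req_s_deg _ _ H1), (req_s_deg _ _ H2). reflexivity.
  + rewrite !deg_s_bag, (deg_list_perm _ _ i P).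
    clear P. induction F; simpl; [reflexivity |].
    rewrite (req_v_deg _ _ H), IHF. reflexivity.
Qed.

Lemma req_bag_in {A} (l m : list (rv A)) : req_s (RBag l) (RBag m) ->
  forall a, In a l -> exists b, In b m /\ req_v a b.
Proof.
  intros H a Ha. inversion H as [| l1 l2 m' P F]; subst.
  assert (Hb : exists b, In b m' /\ req_v a b).
  { clear H P. induction F as [| x y l' m'' Rxy F IHF]; [contradiction |].
    destruct Ha as [<- | Ha].
    - exists y. split; [left |]; auto.
    - destruct (IHF Ha) as [b [Hb Rab]]. exists b. split; [right |]; auto. }
  destruct Hb as [b [Hb Rab]].
  exists b. split; [eapply Permutation_in; [apply Permutation_sym |]; eassumption | exact Rab].
Qed.

Lemma req_bag_length {A} (l m : list (rv A)) :
  req_s (RBag l) (RBag m) -> length l = length m.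
Proof.
  intros H. inversion H as [| l1 l2 m' P F]; subst.
  rewrite (Permutation_length P). exact (Forall2_length F).
Qed.

Lemma req_bag_cons_inv {A} (a : rv A) l m : req_s (RBag (a :: l)) (RBag m) ->
  exists m1 b m2, m = m1 ++ b :: m2 /\ req_v a b /\ req_s (RBag l) (RBag (m1 ++ m2)).
Proof.
  intros H. inversion H as [| l1 l2 m' P F]; subst.
  inversion F as [| a' b l' m'' Rab F']; subst.
  destruct (Permutation_vs_cons_inv P) as [m1 [m2 ->]].
  exists m1, b, m2. repeat split; auto.
  apply req_bag with m''; [| exact F'].
  apply Permutation_sym, (Permutation_cons_app_inv m1 m2 (a := b)), Permutation_sym, P.
Qed.

Lemma req_bag_cons {A} (a b : rv A) l m1 m2 :
  req_v a b -> req_s (RBag l) (RBag (m1 ++ m2)) ->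
  req_s (RBag (a :: l)) (RBag (m1 ++ b :: m2)).
Proof.
  intros Rab H. inversion H as [| l1 l2 m' P F]; subst.
  apply req_bag with (b :: m'); [| constructor; assumption].
  apply Permutation_sym, Permutation_cons_app, Permutation_sym, P.
Qed.

Lemma req_bag_app_mid {A} (a x b c d : list (rv A)) :
  req_s (RBag a) (RBag x) -> req_s (RBag b) (RBag (c ++ d)) ->
  req_s (RBag (a ++ b)) (RBag (c ++ x ++ d)).
Proof.
  intros H1 H2. inversion H1 as [| a1 x1 x' P1 F1]; subst.
  inversion H2 as [| b1 cd cd' P2 F2]; subst.
  apply req_bag with (x' ++ cd'); [| apply Forall2_app; assumption].
  eapply perm_trans; [apply Permutation_app_swap_app | apply Permutation_app; assumption].
Qed.

Lemma req_bag_app {A} (a x b y : list (rv A)) :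
  req_s (RBag a) (RBag x) -> req_s (RBag b) (RBag y) ->
  req_s (RBag (a ++ b)) (RBag (x ++ y)).
Proof. apply (req_bag_app_mid a x b []). Qed.

(** * Taylor expansion is closed under multiset equality *)

Definition lam_bag_of (M : lterm) (l : list (rv nat)) : Prop :=
  forall a, In a l -> exists s, a = RLam s /\ inT M s.

Lemma inT_LLam_bag M l : lam_bag_of M l -> inT (LLam M) (RBag l).
Proof.
  induction l as [| a l IHl]; intros Hl; simpl.
  - exists []. split; [reflexivity | contradiction].
  - destruct (Hl a (or_introl eq_refl)) as [s [-> Hs]].
    destruct IHl as [l' [E Hl']]; [intros b Hb; apply Hl; right; exact Hb |].
    injection E as ->. exists (s :: l'). split; [reflexivity |].
    intros t [<- | Ht]; [exact Hs | exact (Hl' t Ht)].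
Qed.

Lemma inT_LLam_inv M c : inT (LLam M) c -> exists l, c = RBag l /\ lam_bag_of M l.
Proof.
  intros [l [-> Hl]]. exists (map RLam l). split; [reflexivity |].
  intros a Ha. apply in_map_iff in Ha as [s [<- Hs]]. eauto.
Qed.

Lemma req_bag_repeat_inv {A} (a : rv A) l n :
  (forall b, req_v b a -> b = a) -> req_s (RBag l) (RBag (repeat a n)) ->
  l = repeat a (length l).
Proof.
  intros Ha H. apply Forall_eq_repeat, Forall_forall. intros b Hb.
  destruct (req_bag_in _ _ H b Hb) as [b' [Hb' Rb]].
  apply repeat_spec in Hb'. subst b'. symmetry. exact (Ha b Rb).
Qed.

Lemma inT_req M : forall c r, inT M c -> req_s r c -> inT M r.
Proof.
  induction M as [x | j | M IHM | M1 IHM1 M2 IHM2]; intros c r Hc Hr; simpl.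
  - destruct Hc as [n ->]. destruct r as [| l]; [inversion Hr |].
    exists (length l). f_equal. apply req_bag_repeat_inv with n; [| exact Hr].
    intros b Hb. inversion Hb. reflexivity.
  - destruct Hc as [n ->]. destruct r as [| l]; [inversion Hr |].
    exists (length l). f_equal. apply req_bag_repeat_inv with n; [| exact Hr].
    intros b Hb. inversion Hb. reflexivity.
  - apply inT_LLam_inv in Hc as [l [-> Hl]]. destruct r as [| l1]; [inversion Hr |].
    apply inT_LLam_bag. intros a Ha.
    destruct (req_bag_in _ _ Hr a Ha) as [b [Hb Rab]].
    destruct (Hl b Hb) as [s [-> Hs]]. inversion Rab as [| | t s' Rts]; subst.
    exists t. split; [reflexivity | eapply IHM; eassumption].
  - destruct Hc as [s1 [s2 [-> [H1 H2]]]]. inversion Hr; subst. eauto 7.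
Qed.

Lemma fill_list_length l f : length (fill_list l f) = length l.
Proof. revert f; induction l; simpl; auto. Qed.

Lemma deg_list_app l m i : deg_list (l ++ m) i = deg_list l i + deg_list m i.
Proof. induction l; simpl; lia. Qed.

Lemma fill_list_app la lb f : fill_list (la ++ lb) f =
  fill_list la (fun i => firstn (deg_list la i) (f i)) ++
  fill_list lb (fun i => skipn (deg_list la i) (f i)).
Proof.
  revert f; induction la as [| v la IH]; intros f; simpl; [reflexivity |].
  rewrite IH. f_equal; [| f_equal]; f_equal; apply functional_extensionality; intros i.
  - rewrite firstn_firstn. f_equal. lia.
  - rewrite skipn_firstn_comm. f_equal. lia.
  - rewrite skipn_skipn. f_equal. lia.
Qed.

Lemma app_inv_length {A} (m1 m2 a b : list A) :
  m1 ++ m2 = a ++ b -> length m1 = length a -> m1 = a /\ m2 = b.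
Proof.
  revert a; induction m1 as [| z m1 IH]; intros [| x a] E Hl; simpl in *;
    try discriminate; auto.
  injection E as -> E. destruct (IH a E) as [-> ->]; auto.
Qed.

(* No length assumption: it is used for every index, not only those below k. *)
Lemma firstn_skipn_cut {A} n p (x : list A) :
  firstn n (firstn n x ++ skipn p (skipn n x)) = firstn n x /\
  skipn n (firstn n x ++ skipn p (skipn n x)) = skipn p (skipn n x).
Proof.
  destruct (le_lt_dec n (length x)).
  - rewrite firstn_app, skipn_app, length_firstn.
    replace (n - Nat.min n (length x)) with 0 by lia.
    rewrite firstn_firstn, Nat.min_id, (skipn_all2 (firstn n x))
      by (rewrite length_firstn; lia).
    rewrite app_nil_r. auto.
  - rewrite (skipn_all2 x), skipn_nil, app_nil_r by lia.
    rewrite !(firstn_all2 x), skipn_all2 by lia. auto.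
Qed.

(* The other elements of the bag consume the values of [f] with the segment
   used by [b] cut out. *)
Lemma fill_list_pick l f m1 b m2 : fill_list l f = m1 ++ b :: m2 ->
  exists la x lb, l = la ++ x :: lb /\
    b = fill_v x (fun i => firstn (deg_v x i) (skipn (deg_list la i) (f i))) /\
    m1 ++ m2 = fill_list (la ++ lb) (fun i =>
      firstn (deg_list la i) (f i) ++ skipn (deg_v x i) (skipn (deg_list la i) (f i))).
Proof.
  intros H.
  assert (Hn : length m1 < length l)
    by (rewrite <- (fill_list_length l f), H, length_app; simpl; lia).
  rewrite <- (firstn_skipn (length m1) l) in H.
  rewrite fill_list_app in H. apply app_inv_length in H as [H1 H2];
    [| rewrite fill_list_length, length_firstn; lia].
  destruct (skipn (length m1) l) as [| x lb] eqn:E; [discriminate |].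
  injection H2 as Hb Hm2.
  exists (firstn (length m1) l), x, lb. repeat split.
  - rewrite <- E. symmetry. apply firstn_skipn.
  - symmetry. exact Hb.
  - rewrite fill_list_app. f_equal; [rewrite <- H1 at 1 | rewrite <- Hm2];
      f_equal; apply functional_extensionality; intros i; symmetry;
      apply firstn_skipn_cut.
Qed.

(** * Injectivity of filling on a Taylor expansion *)

Definition fill_injective (k : nat) (M : lterm) : Prop :=
  forall r1 r2 vs us, inT M r1 -> inT M r2 ->
  (forall i, i < k -> length (vs i) = deg_s r1 i) ->
  (forall i, i < k -> length (us i) = deg_s r2 i) ->
  req_s (fill_s r1 vs) (fill_s r2 us) ->
  req_s r1 r2 /\ forall i, i < k -> req_s (RBag (vs i)) (RBag (us i)).

Lemma deg_list_repeat_var x n i : deg_list (repeat (RVar x) n) i = 0.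
Proof. induction n; simpl; auto. Qed.

Lemma fill_list_repeat_var x n f : fill_list (repeat (RVar x) n) f = repeat (RVar x) n.
Proof. revert f; induction n; intros f; simpl; f_equal; auto. Qed.

Lemma deg_list_repeat_hole j n i :
  deg_list (repeat (RHole j) n) i = if Nat.eqb i j then n else 0.
Proof. induction n; simpl; [| rewrite IHn]; destruct (Nat.eqb i j); reflexivity. Qed.

Lemma fill_list_repeat_hole j n f :
  length (f j) = n -> fill_list (repeat (RHole j) n) f = f j.
Proof.
  revert f; induction n; intros f Hn; simpl.
  - symmetry. apply length_zero_iff_nil, Hn.
  - rewrite Nat.eqb_refl. destruct (f j) as [| a t] eqn:E; [discriminate |].
    simpl. f_equal. rewrite IHn; rewrite Nat.eqb_refl, E; simpl; auto.
Qed.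

Lemma nil_of_deg_zero (vs : nat -> list rterm_v) (c : rs nat) i :
  length (vs i) = deg_s c i -> deg_s c i = 0 -> vs i = [].
Proof. intros Hl H0. apply length_zero_iff_nil. congruence. Qed.

Lemma fill_injective_LVar k x : fill_injective k (LVar x).
Proof.
  intros r1 r2 vs us [n ->] [m ->] L1 L2 H.
  rewrite !fill_s_bag, !fill_list_repeat_var in H.
  pose proof (req_bag_length _ _ H) as E. rewrite !repeat_length in E. subst m.
  split; [apply req_s_refl |]. intros i Hi.
  rewrite (nil_of_deg_zero vs _ i (L1 i Hi)), (nil_of_deg_zero us _ i (L2 i Hi));
    [apply req_s_refl | |]; rewrite deg_s_bag; apply deg_list_repeat_var.
Qed.

Lemma fill_injective_LHole k j : j < k -> fill_injective k (LHole j).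
Proof.
  intros Hj r1 r2 vs us [n ->] [m ->] L1 L2 H.
  assert (Deg : forall n i, deg_s (RBag (repeat (RHole j) n)) i
                            = if Nat.eqb i j then n else 0)
    by (intros; rewrite deg_s_bag; apply deg_list_repeat_hole).
  pose proof (L1 j Hj) as Lj. pose proof (L2 j Hj) as Mj.
  rewrite Deg, Nat.eqb_refl in Lj, Mj.
  rewrite !fill_s_bag, !fill_list_repeat_hole in H by assumption.
  split.
  - replace m with n by (rewrite <- Lj, <- Mj; exact (req_bag_length _ _ H)).
    apply req_s_refl.
  - intros i Hi. destruct (Nat.eq_dec i j) as [-> | ne]; [exact H |].
    apply Nat.eqb_neq in ne.
    rewrite (nil_of_deg_zero vs _ i (L1 i Hi)), (nil_of_deg_zero us _ i (L2 i Hi));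
      [apply req_s_refl | |]; rewrite Deg, ne; reflexivity.
Qed.

Lemma fill_injective_LApp k M1 M2 :
  fill_injective k M1 -> fill_injective k M2 -> fill_injective k (LApp M1 M2).
Proof.
  intros IH1 IH2 r1 r2 vs us [s1 [s2 [-> [A1 A2]]]] [t1 [t2 [-> [B1 B2]]]] L1 L2 H.
  inversion H as [? ? ? ? H1 H2 |]; subst.
  destruct (IH1 s1 t1 (fun i => firstn (deg_s s1 i) (vs i))
              (fun i => firstn (deg_s t1 i) (us i))) as [R1 Q1]; auto.
  { intros i Hi. rewrite length_firstn, L1 by auto. simpl. lia. }
  { intros i Hi. rewrite length_firstn, L2 by auto. simpl. lia. }
  destruct (IH2 s2 t2 (fun i => skipn (deg_s s1 i) (vs i))
              (fun i => skipn (deg_s t1 i) (us i))) as [R2 Q2]; auto.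
  { intros i Hi. rewrite length_skipn, L1 by auto. simpl. lia. }
  { intros i Hi. rewrite length_skipn, L2 by auto. simpl. lia. }
  split; [constructor; assumption |]. intros i Hi.
  rewrite <- (firstn_skipn (deg_s s1 i) (vs i)), <- (firstn_skipn (deg_s t1 i) (us i)).
  apply req_bag_app; auto.
Qed.

Lemma fill_injective_bag k M : fill_injective k M ->
  forall l1 l2 vs us, lam_bag_of M l1 -> lam_bag_of M l2 ->
  (forall i, i < k -> length (vs i) = deg_list l1 i) ->
  (forall i, i < k -> length (us i) = deg_list l2 i) ->
  req_s (RBag (fill_list l1 vs)) (RBag (fill_list l2 us)) ->
  req_s (RBag l1) (RBag l2) /\ forall i, i < k -> req_s (RBag (vs i)) (RBag (us i)).
Proof.
  intros IHM l1. induction l1 as [| v l1 IH]; intros l2 vs us P1 P2 L1 L2 H.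
  - apply req_bag_length in H. rewrite fill_list_length in H.
    destruct l2; [| discriminate]. split; [apply req_s_refl |]. intros i Hi.
    specialize (L1 i Hi); specialize (L2 i Hi).
    destruct (vs i), (us i); try discriminate; apply req_s_refl.
  - destruct (P1 v (or_introl eq_refl)) as [s [-> Hs]].
    simpl in H. apply req_bag_cons_inv in H as [m1 [b [m2 [E [Hb Hrest]]]]].
    apply fill_list_pick in E as [la [x [lb [-> [-> Em]]]]].
    destruct (P2 x) as [t [-> Ht]]; [apply in_or_app; right; left; reflexivity |].
    simpl in Hb, Hrest. inversion Hb as [| | ? ? Hst]; subst.
    unfold rterm_v in Em. rewrite Em in Hrest.
    assert (Lus : forall i, i < k -> length (us i) = deg_list la i + deg_s t i + deg_list lb i)
      by (intros i Hi; rewrite L2, deg_list_app by assumption; simpl; lia).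
    destruct (IHM s t (fun i => firstn (deg_s s i) (vs i))
                (fun i => firstn (deg_s t i) (skipn (deg_list la i) (us i))) Hs Ht)
      as [Rst Rvs1]; [| | exact Hst |].
    { intros i Hi. rewrite length_firstn, L1 by assumption. simpl. lia. }
    { intros i Hi. rewrite length_firstn, length_skipn, Lus by assumption. lia. }
    destruct (IH (la ++ lb) (fun i => skipn (deg_s s i) (vs i))
                (fun i => firstn (deg_list la i) (us i) ++
                          skipn (deg_s t i) (skipn (deg_list la i) (us i)))
                (fun a Ha => P1 a (or_intror Ha))) as [Rl Rvs2]; [| | | exact Hrest |].
    + intros a Ha. apply P2. apply in_app_or in Ha. apply in_or_app. simpl. tauto.
    + intros i Hi. rewrite length_skipn, L1 by assumption. simpl. lia.
    + intros i Hi. rewrite length_app, length_firstn, !length_skipn, Lus, deg_list_app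
        by assumption. lia.
    + split; [apply req_bag_cons; [constructor |]; assumption |]. intros i Hi.
      rewrite <- (firstn_skipn (deg_s s i) (vs i)),
        <- (firstn_skipn (deg_list la i) (us i)),
        <- (firstn_skipn (deg_s t i) (skipn (deg_list la i) (us i))).
      apply req_bag_app_mid; auto.
Qed.

Lemma fill_injective_LLam k M : fill_injective k M -> fill_injective k (LLam M).
Proof.
  intros IHM r1 r2 vs us H1 H2 L1 L2 H.
  apply inT_LLam_inv in H1 as [l1 [-> P1]]. apply inT_LLam_inv in H2 as [l2 [-> P2]].
  rewrite !fill_s_bag in H.
  apply (fill_injective_bag k M IHM); auto; intros i Hi; rewrite <- deg_s_bag; auto.
Qed.

Lemma fill_injective_holes_below k M : holes_below k M -> fill_injective k M.
Proof.
  induction M as [x | j | M IHM | M1 IHM1 M2 IHM2]; simpl; intros HB.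
  - apply fill_injective_LVar.
  - apply fill_injective_LHole, HB.
  - apply fill_injective_LLam, IHM, HB.
  - apply fill_injective_LApp; [apply IHM1 | apply IHM2]; apply HB.
Qed.

Theorem mainTheorem1 (k : nat) (C : lterm) (c1 c2 rc1 rc2 : rs nat)
  (vs us : nat -> list rterm_v) :
  holes_below k C ->
  inT C c1 -> inT C c2 ->
  rigid_of rc1 c1 -> rigid_of rc2 c2 ->
  (forall i, i < k -> length (vs i) = deg_s c1 i) ->
  (forall i, i < k -> length (us i) = deg_s c2 i) ->
  req_s (fill_s rc1 vs) (fill_s rc2 us) ->
  req_s c1 c2 /\ (forall i, i < k -> req_s (RBag (vs i)) (RBag (us i))).
Proof.
  unfold rigid_of. intros HB H1 H2 R1 R2 L1 L2 H.
  destruct (fill_injective_holes_below k C HB rc1 rc2 vs us) as [R Q].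
  - exact (inT_req C c1 rc1 H1 R1).
  - exact (inT_req C c2 rc2 H2 R2).
  - intros i Hi. rewrite (req_s_deg _ _ R1 i). auto.
  - intros i Hi. rewrite (req_s_deg _ _ R2 i). auto.
  - exact H.
  - split; [| exact Q].
    apply req_s_trans with rc1; [apply req_s_sym; exact R1 |].
    apply req_s_trans with rc2; assumption.
Qed.
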